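(* For $0<m<2$, the element $\hat D_W+m\gamma$ of the C*-algebra $C^*\Pi\otimes\End(S)$ is invertible.
   Context: $d$ is a positive even integer, $\Pi\cong\mathbb{Z}^d$ with generators $t_1,\dots,t_d$, $C^*\Pi\cong C(\hat\Pi)$ its group C*-algebra (with $\hat\Pi=\Hom(\Pi,\mathbb{T})$ and $t\in\Pi$ viewed as the function $\chi\mapsto\chi(t)$). $S$ is the irreducible $\mathbb{Z}_2$-graded representation (grading $\gamma$) of the complex Clifford algebra generated by $c(v_1),\dots,c(v_d)$ with $c(v_j)c(v_l)+c(v_l)c(v_j)=-2\delta_{jl}$, $c(v_j)^*=-c(v_j)$. Set $\hat U_j=t_j$, $\hat\nabla_j=\hat U_j-1$, $\hat D=\sum_j c(v_j)(\hat\nabla_j-\hat\nabla_j^* )/2$, $\hat W=\sum_j(\hat\nabla_j+\hat\nabla_j^* )/2$, $\hat D_W=\hat D+\gamma\hat W$. *)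

From mathcomp Require Import all_boot all_algebra.
From mathcomp Require Import reals complex.
Set Implicit Arguments.
Unset Strict Implicit.
Unset Printing Implicit Defensive.
Import GRing.Theory Num.Theory.
Local Open Scope ring_scope.

Section Defs.
Variable R : realType.
Local Notation C := (R[i]).

Definition adjmx (N : nat) (A : 'M[C]_N) : 'M[C]_N := (map_mx Num.conj A)^T.

(* Pontryagin dual of Pi = Z^d: a character chi is determined by the values
   z j = chi(t_j), which lie in the unit circle T.  So hat Pi = T^d. *)
Definition on_dual (d : nat) (z : 'I_d -> C) : Prop := forall j, `|z j| = 1.

(* An element of C*Pi (x) End(S) = C(hat Pi) (x) M_N(C) = C(hat Pi, M_N(C)),
   represented as a function on characters (only its values on hat Pi matter). *)
Definition cont_on_dual (d N : nat) (F : ('I_d -> C) -> 'M[C]_N) : Prop :=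
  forall z, on_dual z -> forall eps : C, 0 < eps ->
    exists2 delta : C, 0 < delta &
      forall w, on_dual w -> (forall j, `|z j - w j| < delta) ->
        forall a b, `|F z a b - F w a b| < eps.

Definition invertible_in_CPi_End (d N : nat) (F : ('I_d -> C) -> 'M[C]_N) : Prop :=
  exists G : ('I_d -> C) -> 'M[C]_N,
    cont_on_dual G /\
    forall z, on_dual z -> F z *m G z = 1%:M /\ G z *m F z = 1%:M.

Definition graded_clifford_rep (d N : nat) (c : 'I_d -> 'M[C]_N) (gam : 'M[C]_N) : Prop :=
  [/\ forall j l, c j *m c l + c l *m c j = (- 2 * (j == l)%:R)%:M,
      forall j, adjmx (c j) = - c j,
      gam *m gam = 1%:M, adjmx gam = gam &
      forall j, gam *m c j = - (c j *m gam)].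

Definition irreducible_rep (d N : nat) (c : 'I_d -> 'M[C]_N) (gam : 'M[C]_N) : Prop :=
  forall U : 'M[C]_N, (forall j, stablemx U (c j)) -> stablemx U gam ->
    (U == (0 : 'M[C]_N))%MS \/ (U == (1%:M : 'M[C]_N))%MS.

(* The generators: hat U_j = t_j is the function chi |-> chi(t_j) = z j;
   hat U_j^* is chi |-> conj (z j).  Scalar-valued functions act as scalar
   matrices in C*Pi (x) End(S). *)
Definition Uhat (d N : nat) (j : 'I_d) (z : 'I_d -> C) : 'M[C]_N := (z j)%:M.
Definition Nabla (d N : nat) (j : 'I_d) (z : 'I_d -> C) : 'M[C]_N := Uhat N j z - 1%:M.
Definition Nabla_adj (d N : nat) (j : 'I_d) (z : 'I_d -> C) : 'M[C]_N := adjmx (Nabla N j z).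

Definition Dhat (d N : nat) (c : 'I_d -> 'M[C]_N) (z : 'I_d -> C) : 'M[C]_N :=
  \sum_(j < d) c j *m ((2%:R : C)^-1 *: (Nabla N j z - Nabla_adj N j z)).

Definition What (d N : nat) (z : 'I_d -> C) : 'M[C]_N :=
  \sum_(j < d) ((2%:R : C)^-1 *: (Nabla N j z + Nabla_adj N j z)).

Definition DWhat (d N : nat) (c : 'I_d -> 'M[C]_N) (gam : 'M[C]_N)
  (z : 'I_d -> C) : 'M[C]_N :=
  Dhat c z + gam *m What N z.

End Defs.

From mathcomp Require Import all_boot all_algebra.
From mathcomp Require Import reals complex.
From mathcomp Require Import ring lra.
From mathcomp Require Import boolp topology normedtype.
Set Implicit Arguments.
Unset Strict Implicit.
Unset Printing Implicit Defensive.
Import GRing.Theory Num.Theory.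
Import numFieldTopology.Exports numFieldNormedType.Exports ArrowAsUniformType.
Local Open Scope ring_scope.

(* At a character z of Pi, D_W + m gamma is the matrix
   A(z) = sum_j i Im(z_j) c(v_j) + (sum_j (Re z_j - 1) + m) gamma.
   The Clifford relations make A(z) square to the scalar
   g(z) = (sum_j (Re z_j - 1) + m)^2 + sum_j Im(z_j)^2, so A(z)/g(z) is an inverse
   wherever g(z) != 0.  On the torus g vanishes only if every z_j = +-1, and then the
   mass term is m minus an even natural number, which is nonzero for 0 < m < 2.
   Finally z |-> A(z)/g(z) is continuous where g does not vanish. *)

Section CliffordSquare.
Variables (K : numFieldType) (d N : nat) (c : 'I_d -> 'M[K]_N) (gam : 'M[K]_N).
Hypotheses (c_anticomm : forall j l, c j *m c l + c l *m c j = (- 2 * (j == l)%:R)%:M)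
  (gam_sqr : gam *m gam = 1%:M) (gam_c_anticomm : forall j, gam *m c j = - (c j *m gam)).

Lemma clifford_sum_sqr (s : 'I_d -> K) :
  (\sum_j s j *: c j) *m (\sum_j s j *: c j) = (- \sum_j s j ^+ 2)%:M.
Proof.
set P := (X in X = _).
have P_expand : P = \sum_j \sum_l (s j * s l) *: (c j *m c l).
  rewrite /P mulmx_suml; apply: eq_bigr => j _; rewrite mulmx_sumr.
  by apply: eq_bigr => l _; rewrite -scalemxAl -scalemxAr scalerA.
have P_swap : P = \sum_j \sum_l (s j * s l) *: (c l *m c j).
  rewrite P_expand exchange_big; apply: eq_bigr => j _.
  by apply: eq_bigr => l _; rewrite mulrC.
have PP : P + P = (- 2 * \sum_j s j ^+ 2)%:M.
  rewrite {1}P_expand P_swap -big_split mulr_sumr raddf_sum; apply: eq_bigr => j _.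
  rewrite -big_split /=.
  under eq_bigr do rewrite -scalerDr c_anticomm scale_scalar_mx.
  rewrite -raddf_sum (bigD1 j) //= big1 => [|l /negPf]; last first.
    by rewrite eq_sym => ->; rewrite !mulr0.
  by rewrite eqxx addr0 mulr1 mulrC expr2.
have half_half : (2^-1 : K) + 2^-1 = 1 by rewrite [RHS]splitr mul1r.
have -> : P = 2^-1 *: (P + P) by rewrite scalerDr -scalerDl half_half scale1r.
by rewrite PP scale_scalar_mx; congr (_%:M); field.
Qed.

Lemma graded_clifford_sqr (s : 'I_d -> K) (w : K) :
  (\sum_j s j *: c j + w *: gam) *m (\sum_j s j *: c j + w *: gam)
  = (w ^+ 2 - \sum_j s j ^+ 2)%:M.
Proof.
set S := \sum_j s j *: c j.
have cross : S *m (w *: gam) + (w *: gam) *m S = 0.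
  rewrite -scalemxAr -scalemxAl -scalerDr /S mulmx_suml mulmx_sumr -big_split /=.
  rewrite big1 ?scaler0 // => j _.
  by rewrite -scalemxAl -scalemxAr gam_c_anticomm scalerN addrN.
have gam_part : (w *: gam) *m (w *: gam) = (w ^+ 2)%:M.
  by rewrite -scalemxAl -scalemxAr scalerA gam_sqr scale_scalar_mx mulr1 expr2.
rewrite mulmxDl !mulmxDr clifford_sum_sqr gam_part.
by rewrite -!addrA (addrA (S *m _)) cross add0r -raddfD addrC.
Qed.

End CliffordSquare.

Lemma mulmx_sqr_scalar_inv (K : fieldType) (N : nat) (A : 'M[K]_N) (a : K) :
  A *m A = a%:M -> a != 0 -> A *m (a^-1 *: A) = 1%:M /\ (a^-1 *: A) *m A = 1%:M.
Proof.
move=> sqrA a_neq0.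
by rewrite -scalemxAr -scalemxAl sqrA scale_scalar_mx mulVf.
Qed.

Lemma torus_mass_gap (R : realFieldType) (d : nat) (x y : 'I_d -> R) (m : R) :
  (forall j, x j ^+ 2 + y j ^+ 2 = 1) -> 0 < m < 2 ->
  (\sum_j (x j - 1) + m) ^+ 2 + \sum_j y j ^+ 2 != 0.
Proof.
move=> on_circle /andP[m_gt0 m_lt2].
rewrite paddr_eq0 ?sqr_ge0 ?sumr_ge0 // => [|j _]; last exact: sqr_ge0.
apply/negP => /andP[]; rewrite sqrf_eq0 => /eqP mass0 /eqP ysum0.
have x_pm1 j : x j - 1 = 0 \/ x j - 1 = -2.
  have /eqP : y j ^+ 2 = 0 by apply: psumr_eq0P ysum0 j _ => // i _; exact: sqr_ge0.
  rewrite sqrf_eq0 => /eqP yj0.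
  have /eqP := on_circle j; rewrite yj0 expr0n addr0 sqrf_eq1.
  by case/orP => /eqP ->; [left | right]; ring.
have : \sum_j (x j - 1) = 0 \/ \sum_j (x j - 1) <= -2.
  apply: (big_ind (fun t : R => t = 0 \/ t <= -2)) => [|a b|j _]; first by left.
    by move=> ha hb; lra.
  by case: (x_pm1 j) => ->; [left | right].
lra.
Qed.

Section Continuity.
Variables (K : numClosedFieldType) (d : nat).

Lemma conj_continuous : continuous (@Num.conj K).
Proof.
move=> x A /nbhs_ballP[e e0 xeA]; apply/nbhs_ballP; exists e => // y xy; apply: xeA.
by move: xy; rewrite -!ball_normE /= -rmorphB norm_conjC.
Qed.

Lemma Re_continuous : continuous (fun x : K => 'Re x).
Proof.
have -> : (fun x : K => 'Re x) = fun x => (x + x^*) / 2%:R.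
  by apply: funext => x; rewrite ReE.
move=> x; apply: (@continuousM _ _ (fun x => x + x^*) (fun=> 2%:R^-1)).
  by apply: continuousD; [exact: cvg_id | exact: conj_continuous].
exact: cst_continuous.
Qed.

Lemma Im_continuous : continuous (fun x : K => 'Im x).
Proof.
have -> : (fun x : K => 'Im x) = fun x => 'i * (x^* - x) / 2%:R.
  by apply: funext => x; rewrite ImE.
move=> x; apply: (@continuousM _ _ (fun x => 'i * (x^* - x)) (fun=> 2%:R^-1)).
  apply: (@continuousM _ _ (fun=> 'i)); first exact: cst_continuous.
  by apply: continuousB; [exact: conj_continuous | exact: cvg_id].
exact: cst_continuous.
Qed.

Lemma coord_fun_continuous j : continuous (fun z : 'I_d -> K => z j).
Proof.
move=> z A /nbhs_ballP[e e0 zeA]; apply/nbhs_ballP; exists e => // w zw; apply: zeA.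
exact: zw.
Qed.

Lemma sum_continuous (T : topologicalType) (V : normedModType K) (I : Type)
    (r : seq I) (f : I -> T -> V) :
  (forall i, continuous (f i)) -> continuous (fun x => \sum_(i <- r) f i x).
Proof. by move=> f_cont; apply: continuous_big => //; exact: add_continuous. Qed.

Lemma Re_coord_continuous j : continuous (fun z : 'I_d -> K => 'Re (z j)).
Proof.
move=> z; apply: (continuous_comp (f := fun w => w j)).
  exact: coord_fun_continuous.
exact: Re_continuous.
Qed.

Lemma Im_coord_continuous j : continuous (fun z : 'I_d -> K => 'Im (z j)).
Proof.
move=> z; apply: (continuous_comp (f := fun w => w j)).
  exact: coord_fun_continuous.
exact: Im_continuous.
Qed.

End Continuity.

Section DiracSymbol.
Variables (K : numClosedFieldType) (d N : nat) (c : 'I_d -> 'M[K]_N) (gam : 'M[K]_N).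
Variable m : K.
Implicit Types z w : 'I_d -> K.

Definition wilson_mass z : K := \sum_j ('Re (z j) - 1) + m.

Definition dirac_symbol z : 'M[K]_N :=
  \sum_j ('i * 'Im (z j)) *: c j + wilson_mass z *: gam.

Definition symbol_sqnorm z : K := wilson_mass z ^+ 2 + \sum_j 'Im (z j) ^+ 2.

Lemma dirac_symbol_sqr z :
  (forall j l, c j *m c l + c l *m c j = (- 2 * (j == l)%:R)%:M) ->
  gam *m gam = 1%:M -> (forall j, gam *m c j = - (c j *m gam)) ->
  dirac_symbol z *m dirac_symbol z = (symbol_sqnorm z)%:M.
Proof.
move=> c_anticomm gam_sqr gam_c_anticomm.
rewrite graded_clifford_sqr //; congr (_%:M); rewrite /symbol_sqnorm -sumrN.
by congr (_ + _); apply: eq_bigr => j _; rewrite exprMn sqrCi mulN1r opprK.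
Qed.

Lemma wilson_mass_continuous : continuous wilson_mass.
Proof.
move=> z; apply: continuousD; last exact: cst_continuous.
apply: sum_continuous => j {}z.
apply: (continuousB (f := fun w => 'Re (w j)) (g := fun=> 1)).
  exact: Re_coord_continuous.
exact: cst_continuous.
Qed.

Lemma dirac_symbol_continuous : continuous dirac_symbol.
Proof.
move=> z; apply: (continuousD (f := fun w => \sum_j ('i * 'Im (w j)) *: c j)
                              (g := fun w => wilson_mass w *: gam)).
  apply: sum_continuous => j {}z.
  apply: (continuousZ (s := fun w => 'i * 'Im (w j)) (f := fun=> c j)).
    apply: (@continuousM _ _ (fun=> 'i)); first exact: cst_continuous.
    exact: Im_coord_continuous.
  exact: cst_continuous.
apply: (continuousZ (f := fun=> gam)); first exact: wilson_mass_continuous.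
exact: cst_continuous.
Qed.

Lemma symbol_sqnorm_continuous : continuous symbol_sqnorm.
Proof.
move=> z; apply: (continuousD (f := fun w => wilson_mass w ^+ 2)
                              (g := fun w => \sum_j 'Im (w j) ^+ 2)).
  by apply: (continuousM (s := wilson_mass)); exact: wilson_mass_continuous.
apply: sum_continuous => j {}z.
by apply: (continuousM (s := fun w => 'Im (w j))); exact: Im_coord_continuous.
Qed.

Lemma dirac_symbol_inv_continuous z : symbol_sqnorm z != 0 ->
  {for z, continuous (fun w => (symbol_sqnorm w)^-1 *: dirac_symbol w)}.
Proof.
move=> sqnorm_neq0; apply: continuousZ; last exact: dirac_symbol_continuous.
by apply: continuousV => //; exact: symbol_sqnorm_continuous.
Qed.

End DiracSymbol.

Lemma continuous_entrywise_delta (K : numFieldType) (d N : nat)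
    (F : ('I_d -> K) -> 'M[K]_N) z :
  {for z, continuous F} -> forall eps : K, 0 < eps ->
  exists2 delta : K, 0 < delta & forall w, (forall j, `|z j - w j| < delta) ->
    forall a b, `|F z a b - F w a b| < eps.
Proof.
move=> F_cont e e0.
have /nbhs_ballP[del del0 ball_del] : \forall w \near z, ball (F z) e (F w).
  exact: F_cont (nbhsx_ballx _ _ e0).
exists del => // w zw a b; have [_ /(_ a b)] := ball_del w zw.
by rewrite -ball_normE.
Qed.

Section WilsonDirac.
Variable R : realType.
Local Notation C := R[i].

Lemma adjmx_scalar (N : nat) (a : C) : adjmx (a%:M : 'M[C]_N) = (a^*)%:M.
Proof. by apply/matrixP => i k; rewrite !mxE eq_sym rmorphMn. Qed.

Lemma Nabla_scalar (d N : nat) j (z : 'I_d -> C) : Nabla N j z = (z j - 1)%:M.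
Proof. by rewrite /Nabla /Uhat raddfB. Qed.

Lemma DWhat_symbol (d N : nat) (c : 'I_d -> 'M[C]_N) (gam : 'M[C]_N) (m : C) z :
  DWhat c gam z + m *: gam = dirac_symbol c gam m z.
Proof.
rewrite /DWhat /Dhat /What /dirac_symbol /wilson_mass /Nabla_adj.
under eq_bigr do rewrite Nabla_scalar adjmx_scalar -raddfB scale_scalar_mx mul_mx_scalar.
under [X in gam *m X]eq_bigr do rewrite Nabla_scalar adjmx_scalar -raddfD scale_scalar_mx.
rewrite -raddf_sum mul_mx_scalar -addrA -scalerDl.
congr (_ + (_ + _) *: _); apply: eq_bigr => j _; rewrite rmorphB rmorph1.
  by congr (_ *: _); rewrite ImE !mulrA -expr2 sqrCi; field.
by rewrite ReE; field.
Qed.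

Local Open Scope complex_scope.

Lemma Re_complexE (x : C) : 'Re x = (complex.Re x)%:C.
Proof. by rewrite ReE ReJ_add. Qed.

Lemma Im_complexE (x : C) : 'Im x = (complex.Im x)%:C.
Proof. by rewrite ImE ImJ_sub [RHS]mulrC mulrA. Qed.

Lemma symbol_sqnorm_on_dual_neq0 (d : nat) (m : C) (z : 'I_d -> C) :
  0 < m < 2 -> on_dual z -> symbol_sqnorm m z != 0.
Proof.
move=> /andP[m_gt0 m_lt2] z_dual.
have mE : m = (complex.Re m)%:C.
  by rewrite -Re_complexE; apply/esym/Creal_ReP/gtr0_real.
have m_range : 0 < complex.Re m < 2 by rewrite -!ltcR -mE rmorph0 rmorph_nat m_gt0.
have on_circle j : complex.Re (z j) ^+ 2 + complex.Im (z j) ^+ 2 = 1.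
  apply: complexI; have := normC2_Re_Im (z j).
  by rewrite z_dual expr1n Re_complexE Im_complexE rmorphD !rmorphXn rmorph1 => <-.
have -> : symbol_sqnorm m z =
    ((\sum_j (complex.Re (z j) - 1) + complex.Re m) ^+ 2
     + \sum_j complex.Im (z j) ^+ 2)%:C.
  rewrite /symbol_sqnorm /wilson_mass {1}mE rmorphD rmorphXn rmorphD !rmorph_sum.
  congr (_ ^+ 2 + _); [congr (_ + _) |]; apply: eq_bigr => j _.
    by rewrite Re_complexE rmorphB rmorph1.
  by rewrite Im_complexE rmorphXn.
by rewrite fmorph_eq0; exact: torus_mass_gap.
Qed.

End WilsonDirac.

Theorem lemma3p3 (R : realType) (d N : nat) (c : 'I_d -> 'M[R[i]]_N)
  (gam : 'M[R[i]]_N) (m : R[i]) :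
  (0 < d)%N -> ~~ odd d ->
  graded_clifford_rep c gam -> irreducible_rep c gam ->
  0 < m < 2 ->
  invertible_in_CPi_End (fun z => DWhat c gam z + m *: gam).
Proof.
move=> _ _ [c_anticomm _ gam_sqr _ gam_c_anticomm] _ m_range.
exists (fun z => (symbol_sqnorm m z)^-1 *: dirac_symbol c gam m z); split.
  move=> z z_dual e e0.
  have sqnorm_neq0 := symbol_sqnorm_on_dual_neq0 m_range z_dual.
  have [del del0 close] := continuous_entrywise_delta
    (dirac_symbol_inv_continuous (c := c) (gam := gam) sqnorm_neq0) e0.
  by exists del => // w _; exact: close.
move=> z z_dual; rewrite DWhat_symbol.
apply: mulmx_sqr_scalar_inv; first exact: dirac_symbol_sqr.
exact: symbol_sqnorm_on_dual_neq0.
Qed.
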